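(* Let $f_1,\dots,f_n:\mathbb{R}^d\to\mathbb{R}$ be continuously differentiable, where $f_i$ has ${\bm L}_i$-Lipschitz gradient with ${\bm L}_i\in\mathbb{S}^d_{++}$, and $f=\frac1n\sum_i f_i$. If ${\bm L}\in\mathbb{S}^d_{++}$ satisfies $${\bm L}\,\lambda_{\min}({\bm L})=\frac1n\sum_{i=1}^n\lambda_{\max}({\bm L}_i)\,{\bm L}_i,$$ then $f$ has ${\bm L}$-Lipschitz gradient.
   Context: $\mathbb{S}^d_{++}$: symmetric positive definite matrices; $\|x\|_{\bm M}^2:=x^\top{\bm M}x$; $\lambda_{\max},\lambda_{\min}$: largest/smallest eigenvalue. A differentiable $g$ has ${\bm L}$-Lipschitz gradient if $\|\nabla g(x)-\nabla g(y)\|_{{\bm L}^{-1}}\le\|x-y\|_{\bm L}$ for all $x,y\in\mathbb{R}^d$. *)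

From HB Require Import structures.
From mathcomp Require Import all_boot all_order all_algebra.
From mathcomp Require Import all_classical all_reals all_analysis.
Set Implicit Arguments. Unset Strict Implicit. Unset Printing Implicit Defensive.
Import Order.TTheory GRing.Theory Num.Theory.
Import numFieldNormedType.Exports.
Local Open Scope classical_set_scope.
Local Open Scope ring_scope.

Definition qform {R : realType} {d : nat} (M : 'M[R]_d) (x : 'rV[R]_d) : R :=
  (x *m M *m x^T) 0 0.

Definition spd {R : realType} {d : nat} (M : 'M[R]_d) : Prop :=
  M^T = M /\ forall x : 'rV[R]_d, x != 0 -> 0 < qform M x.

Definition lambda_max {R : realType} {d : nat} (M : 'M[R]_d) : R :=
  sup [set a : R | eigenvalue M a].
Definition lambda_min {R : realType} {d : nat} (M : 'M[R]_d) : R :=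
  inf [set a : R | eigenvalue M a].

Definition grad {R : realType} {d : nat} (f : 'rV[R]_d -> R) (x : 'rV[R]_d)
  : 'rV[R]_d := \row_(j < d) ('D_(delta_mx 0 j) f x).

Definition C1 {R : realType} {d : nat} (f : 'rV[R]_d -> R) : Prop :=
  (forall x, differentiable f x) /\ continuous (grad f).

Definition lipschitz_grad {R : realType} {d : nat} (L : 'M[R]_d)
  (g : 'rV[R]_d -> R) : Prop :=
  forall x y : 'rV[R]_d,
    Num.sqrt (qform (invmx L) (grad g x - grad g y)) <= Num.sqrt (qform L (x - y)).

(* Write u_i for the difference of the gradients of f_i at x and y. Since
   L_i <= lambda_max(L_i) I, every u satisfies |u|^2 <= lambda_max(L_i) ||u||^2_{L_i^-1},
   so the Lipschitz hypothesis gives |u_i|^2 <= lambda_max(L_i) ||x - y||^2_{L_i}.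
   Averaging, Jensen's inequality |mean u_i|^2 <= mean |u_i|^2 and the hypothesis on L
   bound |grad f x - grad f y|^2 by lambda_min(L) ||x - y||^2_L, and
   lambda_min(L) ||w||^2_{L^-1} <= |w|^2 because L >= lambda_min(L) I.  The extremal
   eigenvalues bound the Rayleigh quotient because the unit sphere is compact and a
   maximiser of x |-> x A x^T on it is an eigenvector of A. *)

From HB Require Import structures.
From mathcomp Require Import all_boot all_order all_algebra.
From mathcomp Require Import all_classical all_reals all_analysis.
From mathcomp Require Import ring lra.
Set Implicit Arguments. Unset Strict Implicit. Unset Printing Implicit Defensive.
Import Order.TTheory GRing.Theory Num.Theory.
Import numFieldNormedType.Exports.
Local Open Scope classical_set_scope.
Local Open Scope ring_scope.

Section QuadraticForms.
Variables (R : realType) (d : nat).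
Implicit Types (M N : 'M[R]_d) (x y : 'rV[R]_d) (a : R).

Definition bform M x y := (x *m M *m y^T) 0 0.

Lemma qform1E x : qform 1 x = \sum_j x 0 j ^+ 2.
Proof. by rewrite /qform mulmx1 mxE; apply: eq_bigr => j _; rewrite mxE expr2. Qed.

Lemma qform0v M : qform M 0 = 0.
Proof. by rewrite /qform !mul0mx mxE. Qed.

Lemma qform1_ge0 x : 0 <= qform 1 x.
Proof. by rewrite qform1E sumr_ge0 // => j _; rewrite sqr_ge0. Qed.

Lemma qform1_eq0 x : (qform 1 x == 0) = (x == 0).
Proof.
apply/idP/eqP => [|->]; last by rewrite qform0v.
rewrite qform1E psumr_eq0 => [/allP x0|j _]; last exact: sqr_ge0.
apply/rowP => j; rewrite mxE.
by have := x0 j (mem_index_enum j); rewrite /= sqrf_eq0 => /eqP.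
Qed.

Lemma qform1_gt0 x : x != 0 -> 0 < qform 1 x.
Proof. by rewrite lt_def qform1_ge0 qform1_eq0 andbT. Qed.

Lemma qformD M N x : qform (M + N) x = qform M x + qform N x.
Proof. by rewrite /qform mulmxDr mulmxDl mxE. Qed.

Lemma qformZ a M x : qform (a *: M) x = a * qform M x.
Proof. by rewrite /qform -scalemxAr -scalemxAl mxE. Qed.

Lemma qformN M x : qform (- M) x = - qform M x.
Proof. by rewrite -scaleN1r qformZ mulN1r. Qed.

Lemma qformB M N x : qform (M - N) x = qform M x - qform N x.
Proof. by rewrite qformD qformN. Qed.

Lemma qform_scalar a x : qform a%:M x = a * qform 1 x.
Proof. by rewrite -scalemx1 qformZ. Qed.

Lemma qform_sum n (F : 'I_n -> 'M[R]_d) x :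
  qform (\sum_(i < n) F i) x = \sum_(i < n) qform (F i) x.
Proof.
apply: (big_rec2 (fun A b => qform A x = b)); first by rewrite /qform mulmx0 mul0mx mxE.
by move=> i A b _ <-; rewrite qformD.
Qed.

Lemma qformZv M a x : qform M (a *: x) = a ^+ 2 * qform M x.
Proof. by rewrite /qform linearZ /= -!scalemxAl -scalemxAr scalerA mxE expr2. Qed.

Lemma qformNv M x : qform M (- x) = qform M x.
Proof. by rewrite -scaleN1r qformZv sqrrN expr1n mul1r. Qed.

Lemma bformZl M a x y : bform M (a *: x) y = a * bform M x y.
Proof. by rewrite /bform -!scalemxAl mxE. Qed.

Lemma bformZr M a x y : bform M x (a *: y) = a * bform M x y.
Proof. by rewrite /bform linearZ /= -scalemxAr mxE. Qed.

Lemma bformNr M x y : bform M x (- y) = - bform M x y.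
Proof. by rewrite -scaleN1r bformZr mulN1r. Qed.

Lemma bform_sym M x y : M^T = M -> bform M x y = bform M y x.
Proof.
move=> MT; rewrite /bform -[in LHS](trmxK (_ *m _ *m _)) [in LHS]mxE.
by rewrite !trmx_mul trmxK MT mulmxA.
Qed.

Lemma qformDv M x y : M^T = M ->
  qform M (x + y) = qform M x + 2 * bform M x y + qform M y.
Proof.
move=> MT; rewrite /qform linearD /= !mulmxDl !mulmxDr.
by have := bform_sym x y MT; rewrite /bform !mxE => <-; ring.
Qed.

Lemma qform_invmx M x : M^T = M -> M \in unitmx ->
  qform (invmx M) x = qform M (x *m invmx M).
Proof.
move=> MT Mu; rewrite [in LHS]/qform -{2}(mulmxKV Mu x) trmx_mul MT.
by rewrite /qform !mulmxA.
Qed.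

End QuadraticForms.

Lemma quadratic_ge0_linear_coef_eq0 (R : realFieldType) (s Q : R) : 0 <= Q ->
  (forall t, 0 <= 2 * t * s + t ^+ 2 * Q) -> s = 0.
Proof.
move=> Q_ge0 ge0; pose t := - s / (Q + 1).
have Q1_gt0 : 0 < Q + 1 by lra.
have st : s = - (t * (Q + 1)) by rewrite /t mulrAC -mulrA divff ?gt_eqF // mulr1 opprK.
have : 2 * t * s + t ^+ 2 * Q = - (t ^+ 2 * (Q + 2)) by rewrite {1}st; ring.
move: (ge0 t) => /[swap] ->; rewrite oppr_ge0 pmulr_lle0; last lra.
move=> t2_le0; have /eqP : t ^+ 2 = 0 by apply/le_anti; rewrite t2_le0 sqr_ge0.
by rewrite sqrf_eq0 st => /eqP ->; rewrite mul0r oppr0.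
Qed.

Lemma psd_qform_eq0 (R : realType) d (M : 'M[R]_d) x : M^T = M ->
  (forall y, 0 <= qform M y) -> qform M x = 0 -> x *m M = 0.
Proof.
move=> MT psd qx0; apply/eqP; rewrite -qform1_eq0; apply/eqP.
(* expand the psd inequality along the line through x in direction x M *)
apply: (quadratic_ge0_linear_coef_eq0 (psd (x *m M))) => t.
have := psd (x + t *: (x *m M)).
rewrite qformDv // qx0 add0r bformZr qformZv mulrA.
by rewrite /bform /qform mulmx1.
Qed.

Lemma continuous_sum (K : numFieldType) (T : topologicalType) n (f : 'I_n -> T -> K) :
  (forall i, continuous (f i)) -> continuous (fun x => \sum_(i < n) f i x).
Proof.
move=> cf; rewrite -fct_sumE.
apply: (big_ind (fun g : T -> K => continuous g)) => // [x|g h cg ch x].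
  exact: cst_continuous.
by apply: continuousD; [exact: cg|exact: ch].
Qed.

Lemma continuous_qform (R : realType) d (M : 'M[R]_d) : continuous (qform M).
Proof.
have -> : qform M = fun x => \sum_j (\sum_i x 0 i * M i j) * x 0 j.
  by apply: funext => x; rewrite /qform !mxE; apply: eq_bigr => j _; rewrite !mxE.
apply: continuous_sum => j x; apply: continuousM; last exact: coord_continuous.
move: x; apply: continuous_sum => i x; apply: continuousM.
  exact: coord_continuous.
exact: cst_continuous.
Qed.

Lemma compact_unit_sphere (R : realType) d :
  compact [set x : 'rV[R]_d | qform 1 x = 1].
Proof.
have closed_sphere : closed [set x : 'rV[R]_d | qform 1 x = 1].
  rewrite (_ : mkset _ = qform 1 @^-1` [set 1]) //.
  by apply: preimage_closed; [move=> x _; exact: continuous_qform|exact: closed_eq].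
apply: (subclosed_compact closed_sphere
  (@rV_compact R _ (fun=> `[(-1 : R), 1]%classic) (fun=> @segment_compact R _ _))).
move=> x /= x1 i; rewrite in_itv /= -ler_norml -(expr_le1 (n := 2)) //.
rewrite real_normK ?num_real // -x1 qform1E (bigD1 i) //= lerDl.
by rewrite sumr_ge0 // => j _; rewrite sqr_ge0.
Qed.

Section ExtremalEigenvalues.
Variables (R : realType) (d : nat).
Implicit Types (A : 'M[R]_d) (x : 'rV[R]_d) (a l : R).

Lemma eigenvector_qform A x a : x *m A = a *: x -> qform A x = a * qform 1 x.
Proof. by move=> xA; rewrite /qform xA mulmx1 -scalemxAl mxE. Qed.

Lemma eigenvalueN A a : eigenvalue (- A) a = eigenvalue A (- a).
Proof.
apply/eigenvalueP/eigenvalueP => -[x xA x0]; exists x => //.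
  by rewrite -[A]opprK mulmxN xA scaleNr.
by rewrite mulmxN xA scaleNr opprK.
Qed.

Lemma spd_eigenvalue_gt0 A a : spd A -> eigenvalue A a -> 0 < a.
Proof.
move=> [_ pdA] /eigenvalueP[x xA x0].
by have := pdA x x0; rewrite (eigenvector_qform xA) pmulr_lgt0 // qform1_gt0.
Qed.

Lemma spd_unitmx A : spd A -> A \in unitmx.
Proof.
move=> spdA; apply/negPn/negP => Anu.
have : eigenvalue A 0.
  by rewrite /eigenvalue /eigenspace raddf0 subr0 kermx_eq0 row_free_unit.
by move/(spd_eigenvalue_gt0 spdA); rewrite ltxx.
Qed.

Lemma spd_qform_ge0 A x : spd A -> 0 <= qform A x.
Proof.
move=> [_ pdA]; have [->|x0] := eqVneq x 0; first by rewrite qform0v.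
exact/ltW/pdA.
Qed.

Lemma lambda_max_eq A l : eigenvalue A l ->
  (forall x, qform A x <= l * qform 1 x) -> lambda_max A = l.
Proof.
move=> eigl ub; have ubl a : eigenvalue A a -> a <= l.
  move=> /eigenvalueP[x xA x0]; have := ub x.
  by rewrite (eigenvector_qform xA) ler_pM2r // qform1_gt0.
apply/le_anti/andP; split; first by apply: ge_sup; [exists l|exact: ubl].
by apply: ub_le_sup => //; exists l => a; exact: ubl.
Qed.

Lemma lambda_minE A : lambda_min A = - lambda_max (- A).
Proof.
rewrite /lambda_min /inf /lambda_max; congr (- sup _).
apply/seteqP; split => [_ [a eiga <-]|a /=]; first by rewrite /= eigenvalueN opprK.
by rewrite eigenvalueN => eiga; exists (- a); rewrite ?opprK.
Qed.

End ExtremalEigenvalues.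

Lemma rayleigh_max (R : realType) d (A : 'M[R]_d.+1) : A^T = A ->
  exists2 l, eigenvalue A l & forall x, qform A x <= l * qform 1 x.
Proof.
move=> AT; pose S := [set x : 'rV[R]_d.+1 | qform 1 x = 1].
have S_neq0 : S !=set0.
  exists (delta_mx 0 0); rewrite /S /= qform1E (bigD1 ord0) //= big1.
    by rewrite mxE eqxx expr1n addr0.
  by move=> j /negPf j0; rewrite mxE j0 /= expr0n.
have [v /[!inE] /= v1 vmax] := compact_EVT_max S_neq0 (@compact_unit_sphere R d.+1)
  (continuous_subspaceT (@continuous_qform _ _ A)).
pose l := qform A v.
(* homogeneity extends the maximality of v on the sphere to all of R^d *)
have ub x : qform A x <= l * qform 1 x.
  have [->|x0] := eqVneq x 0; first by rewrite !qform0v mulr0.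
  have x_gt0 := qform1_gt0 x0.
  have : qform A ((Num.sqrt (qform 1 x))^-1 *: x) <= l.
    by apply: vmax; rewrite inE /S /= qformZv exprVn sqr_sqrtr ?mulVf ?gt_eqF ?ltW.
  by rewrite qformZv exprVn (sqr_sqrtr (ltW x_gt0)) ler_pdivrMl // mulrC.
exists l => //; apply/eigenvalueP; exists v; last first.
  by rewrite -qform1_eq0 v1 oner_eq0.
(* v is a zero of the positive semidefinite form of l I - A *)
have lA_T : (l%:M - A)^T = l%:M - A by rewrite linearB /= tr_scalar_mx AT.
have : v *m (l%:M - A) = 0.
  apply: psd_qform_eq0 => // [y|]; first by rewrite qformB qform_scalar subr_ge0.
  by rewrite qformB qform_scalar v1 mulr1 subrr.
by rewrite mulmxBr mul_mx_scalar => /eqP; rewrite subr_eq0 => /eqP <-.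
Qed.

Lemma lambda_max_spec (R : realType) d (A : 'M[R]_d.+1) : A^T = A ->
  eigenvalue A (lambda_max A) /\ forall x, qform A x <= lambda_max A * qform 1 x.
Proof. by move=> /rayleigh_max[l eigl ub]; rewrite (lambda_max_eq eigl ub). Qed.

Lemma lambda_min_spec (R : realType) d (A : 'M[R]_d.+1) : A^T = A ->
  eigenvalue A (lambda_min A) /\ forall x, lambda_min A * qform 1 x <= qform A x.
Proof.
move=> AT; have NAT : (- A)^T = - A by rewrite linearN /= AT.
have [eigl ub] := lambda_max_spec NAT.
rewrite lambda_minE -eigenvalueN; split => // x.
by rewrite mulNr lerNl -qformN.
Qed.

Section InverseBounds.
Variables (R : realType) (d : nat) (M : 'M[R]_d).
Hypotheses (MT : M^T = M) (M_unit : M \in unitmx).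
Implicit Types (c m : R) (u x : 'rV[R]_d).

Lemma qform_invmx_lb c u : 0 < c -> (forall x, 0 <= qform M x) ->
  (forall x, qform M x <= c * qform 1 x) -> qform 1 u <= c * qform (invmx M) u.
Proof.
move=> c_gt0 psd ub; rewrite qform_invmx //; set w := u *m invmx M.
have wM : w *m M = u by rewrite mulmxKV.
(* positivity of M at w (c I - M) = c w - u and of c I - M at u *)
have := psd (c *: w - u); rewrite qformDv // qformNv bformNr bformZl qformZv.
have -> : bform M w u = qform 1 u by rewrite /bform /qform mulmx1 wM.
have := ub u; have := qform1_ge0 u => u_ge0 uc wc.
by rewrite -(ler_pM2l c_gt0); nra.
Qed.

Lemma qform_invmx_ub m u : 0 <= m ->
  (forall x, m * qform 1 x <= qform M x) -> m * qform (invmx M) u <= qform 1 u.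
Proof.
move=> m_ge0 lb; rewrite qform_invmx //; set w := u *m invmx M.
have uE : u = w *m (M - m%:M) + m *: w by rewrite mulmxBr mul_mx_scalar subrK mulmxKV.
have Mm_ge0 : 0 <= qform (M - m%:M) w by rewrite qformB qform_scalar subr_ge0.
rewrite [in X in _ <= X]uE qformDv ?trmx1 // bformZr qformZv.
have -> : bform 1 (w *m (M - m%:M)) w = qform (M - m%:M) w by rewrite /bform /qform mulmx1.
move: Mm_ge0; rewrite qformB qform_scalar.
have := qform1_ge0 w; have := qform1_ge0 (w *m (M - m%:M)).
nra.
Qed.

End InverseBounds.

Lemma sqr_mean_le (R : realFieldType) n (a : 'I_n -> R) : (0 < n)%N ->
  (n%:R^-1 * \sum_i a i) ^+ 2 <= n%:R^-1 * \sum_i a i ^+ 2.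
Proof.
move=> n_gt0; set mu := n%:R^-1 * \sum_i a i.
have nR_gt0 : (0 : R) < n%:R by rewrite ltr0n.
have sum_a : \sum_i a i = n%:R * mu by rewrite /mu mulrA divff ?gt_eqF // mul1r.
have : 0 <= \sum_i (a i - mu) ^+ 2 by apply: sumr_ge0 => i _; rewrite sqr_ge0.
have -> : \sum_i (a i - mu) ^+ 2 = \sum_i a i ^+ 2 - 2 * mu * \sum_i a i + n%:R * mu ^+ 2.
  rewrite (eq_bigr (fun i => a i ^+ 2 - 2 * mu * a i + mu ^+ 2)); last by move=> i _; ring.
  by rewrite big_split sumrB -mulr_sumr sumr_const card_ord -[mu ^+ 2 *+ n]mulr_natl.
by rewrite sum_a ler_pdivlMl //; nra.
Qed.

Lemma qform1_mean_le (R : realType) d n (u : 'I_n -> 'rV[R]_d) : (0 < n)%N ->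
  qform 1 (n%:R^-1 *: \sum_i u i) <= n%:R^-1 * \sum_i qform 1 (u i).
Proof.
move=> n_gt0; rewrite qform1E (eq_bigr _ (fun i _ => qform1E (u i))).
rewrite exchange_big mulr_sumr; apply: ler_sum => j _.
by rewrite mxE summxE; exact: sqr_mean_le.
Qed.

Lemma grad_mean (R : realType) d n (F : 'I_n -> 'rV[R]_d -> R) x :
  (forall i x, differentiable (F i) x) ->
  grad (fun x => n%:R^-1 * \sum_(i < n) F i x) x = n%:R^-1 *: \sum_i grad (F i) x.
Proof.
move=> dF; apply/rowP => j; rewrite !mxE summxE.
have -> : (fun x => n%:R^-1 * \sum_(i < n) F i x) = n%:R^-1 \*o (\sum_(i < n) F i).
  by rewrite fct_sumE.
rewrite deriveMl; last by apply: derivable_sum => i; exact: diff_derivable.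
rewrite derive_sum => [|i]; last exact: diff_derivable.
by congr (_ * _); apply: eq_bigr => i _; rewrite mxE.
Qed.

Lemma lipschitz_grad_qform1 (R : realType) d (M : 'M[R]_d.+1) g x y :
  spd M -> lipschitz_grad M g ->
  qform 1 (grad g x - grad g y) <= lambda_max M * qform M (x - y).
Proof.
move=> spdM lipg; have [eigM ubM] := lambda_max_spec (proj1 spdM).
have lmax_gt0 := spd_eigenvalue_gt0 spdM eigM.
apply: le_trans (qform_invmx_lb (proj1 spdM) (spd_unitmx spdM) _ lmax_gt0
  (fun x => spd_qform_ge0 x spdM) ubM) _.
by rewrite ler_pM2l // -ler_sqrt ?lipg // spd_qform_ge0.
Qed.

Unset Implicit Arguments.

Theorem mainTheorem7 (R : realType) (d n : nat) (F : 'I_n -> 'rV[R]_d -> R)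
  (Ls : 'I_n -> 'M[R]_d) (L : 'M[R]_d) :
  (0 < n)%N ->
  (forall i, C1 (F i)) ->
  (forall i, spd (Ls i)) ->
  (forall i, lipschitz_grad (Ls i) (F i)) ->
  spd L ->
  lambda_min L *: L = n%:R^-1 *: \sum_(i < n) (lambda_max (Ls i) *: Ls i) ->
  lipschitz_grad L (fun x => n%:R^-1 * \sum_(i < n) F i x).
Proof.
case: d F Ls L => [|d] F Ls L n_gt0 C1F spdLs lipF spdL L_mean x y.
  (* in dimension 0 every form vanishes, whereas the extremal eigenvalues are junk *)
  by rewrite /qform !mxE !big_ord0.
have dF i : forall x, differentiable (F i) x by case: (C1F i).
rewrite !grad_mean // -scalerBr -sumrB.
have [eigL lbL] := lambda_min_spec (proj1 spdL).
have lmin_gt0 := spd_eigenvalue_gt0 spdL eigL.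
have mean_le : qform 1 (n%:R^-1 *: \sum_i (grad (F i) x - grad (F i) y))
    <= lambda_min L * qform L (x - y).
  apply: le_trans (qform1_mean_le _ n_gt0) _.
  rewrite -qformZ L_mean qformZ qform_sum ler_pM2l ?invr_gt0 ?ltr0n //.
  by apply: ler_sum => i _; rewrite qformZ; exact: lipschitz_grad_qform1.
rewrite ler_sqrt ?spd_qform_ge0 // -(ler_pM2l lmin_gt0).
apply: le_trans mean_le.
by apply: (qform_invmx_ub (proj1 spdL) (spd_unitmx spdL)) (ltW lmin_gt0) lbL.
Qed.
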